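(* Let $k$ be a field of characteristic $p>0$, $A=k[x_1,\dots,x_r]/(x_1^p,\dots,x_r^p)$, and $M$ any finitely generated $A$-module. Then the two homomorphisms \[ \Theta^M_{\Delta_{\mathrm{Gr}}},\ \Theta^M_{\Delta_{\mathrm{Lie}}}\colon\operatorname{Ext}^*_A(k,k)\longrightarrow\operatorname{Ext}^*_A(M,M) \] coincide on the subring $S=k[\zeta_1,\dots,\zeta_r]$ of $\operatorname{Ext}^*_A(k,k)$.
   Context: $A$ is the group algebra of the elementary abelian group $E=\langle g_1,\dots,g_r\rangle$ of order $p^r$ with $x_i=g_i-1$. Two Hopf structures: $\Delta_{\mathrm{Gr}}(x_i)=x_i\otimes1+x_i\otimes x_i+1\otimes x_i$ (i.e. $g\mapsto g\otimes g$), antipode $g_i\mapsto g_i^{-1}$; and $\Delta_{\mathrm{Lie}}(x_i)=x_i\otimes1+1\otimes x_i$, antipode $x_i\mapsto-x_i$. For a comultiplication $\Delta$, $\Theta^M_\Delta$ is induced by the exact functor $X\mapsto X\otimes_kM$ with $A$-action $\alpha(x\otimes m)=\sum_{(\alpha)}\alpha_1x\otimes\alpha_2m$ (where $\Delta(\alpha)=\sum\alpha_1\otimes\alpha_2$): it sends the Yoneda class of an exact sequence $0\to k\to E_n\to\cdots\to E_1\to k\to0$ to the class of $0\to M\to E_n\otimes_kM\to\cdots\to E_1\otimes_kM\to M\to0$. The classes $\zeta_i\in\operatorname{Ext}^2_A(k,k)$: with $P^{(i)}_*$ the resolution $\cdots\to A_i\xrightarrow{x_i}A_i\xrightarrow{x_i^{p-1}}A_i\xrightarrow{x_i}A_i\to0$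 of $k$ over $A_i=k[x_i]/(x_i^p)$ and $P_*=P^{(1)}_*\otimes_k\cdots\otimes_kP^{(r)}_*$ (summands $P_{j_1,\dots,j_r}\cong A$), $\zeta_i$ is the class of the cochain $P_*\to k$ that is the augmentation on $P_{j_1,\dots,j_r}$ with $j_i=2$, $j_\ell=0$ for $\ell\neq i$, and zero elsewhere. (For $p=2$, $\zeta_i=\eta_i^2$ where $\eta_i$ is the analogous degree-one class; in general $\zeta_i$ is the Bockstein of $\eta_i$.) $S$ is the polynomial subring they generate. *)

From HB Require Import structures.
From mathcomp Require Import all_boot all_order all_algebra.
From Stdlib Require Import Relations.Relation_Operators.
Set Implicit Arguments. Unset Strict Implicit. Unset Printing Implicit Defensive.
Import GRing.Theory.
Local Open Scope ring_scope.

(* Conventions: vectors are ROW vectors, matrices act on the right.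
   A = k[x_1..x_r]/(x_i^p) (commutative), so a (finitely generated = finite
   dimensional) A-module is a k-space k^n together with r commuting
   matrices X_i with X_i^p = 0 (X_i = action of x_i). *)

Section Defs.
Variables (k : fieldType) (r p : nat).

Record amod := AMod { adim : nat; aact : 'I_r -> 'M[k]_adim }.

Definition is_mod (X : amod) : Prop :=
  (forall i j, aact X i *m aact X j = aact X j *m aact X i) /\
  (forall i, aact X i ^+ p = 0).

Definition is_hom (X Y : amod) (f : 'M[k]_(adim X, adim Y)) : Prop :=
  forall i, aact X i *m f = f *m aact Y i.

Definition kmod : amod := AMod (fun _ : 'I_r => (0 : 'M[k]_1)).

(* chain Z X : X -> Y_1 -> ... -> Y_m -> Z  (Z fixed target) *)
Inductive chain (Z : amod) : amod -> Type :=
| cend (X : amod) : 'M[k]_(adim X, adim Z) -> chain Z X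
| cstep (X Y : amod) : 'M[k]_(adim X, adim Y) -> chain Z Y -> chain Z X.

(* An n-extension 0 -> N -> E_n -> ... -> E_1 -> Z -> 0 (n >= 1):
   first middle term, the map N -> E_n, and the rest of the chain. *)
Record ext (N Z : amod) := Ext {
  e_first : amod;
  e_inj : 'M[k]_(adim N, adim e_first);
  e_rest : chain Z e_first }.

Fixpoint exact_from (Z X : amod) (c : chain Z X) {struct c} :
    forall W : amod, 'M[k]_(adim W, adim X) -> Prop :=
  match c in chain _ X' return forall W : amod, 'M[k]_(adim W, adim X') -> Prop with
  | cend X g => fun W f =>
      [/\ f *m g = 0, (\rank f + \rank g)%N = adim X, row_full g,
          is_hom g & is_mod Z]
  | cstep X Y g c' => fun W f =>
      [/\ f *m g = 0, (\rank f + \rank g)%N = adim X, is_hom g,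
          is_mod Y & exact_from c' g]
  end.

Definition ext_exact (N Z : amod) (e : ext N Z) : Prop :=
  [/\ is_mod N, is_mod (e_first e), row_free (e_inj e), is_hom (e_inj e)
    & exact_from (e_rest e) (e_inj e)].

(* morphism of sequences, identity at both ends *)
Fixpoint chain_morph (Z X1 : amod) (c1 : chain Z X1) {struct c1} :
    forall X2 : amod, 'M[k]_(adim X1, adim X2) -> chain Z X2 -> Prop :=
  match c1 in chain _ X1'
    return forall X2 : amod, 'M[k]_(adim X1', adim X2) -> chain Z X2 -> Prop with
  | cend X1' g1 => fun X2 h c2 =>
      match c2 in chain _ X2' return 'M[k]_(adim X1', adim X2') -> Prop with
      | cend _ g2 => fun h => g1 = h *m g2
      | cstep _ _ _ _ => fun _ => False
      end h
  | cstep X1' Y1 g1 c1' => fun X2 h c2 =>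
      match c2 in chain _ X2' return 'M[k]_(adim X1', adim X2') -> Prop with
      | cend _ _ => fun _ => False
      | cstep _ Y2 g2 c2' => fun h =>
          exists h' : 'M[k]_(adim Y1, adim Y2),
            [/\ is_hom h', g1 *m h' = h *m g2 & chain_morph c1' h' c2']
      end h
  end.

Definition ext_morph (N Z : amod) (e1 e2 : ext N Z) : Prop :=
  exists h : 'M[k]_(adim (e_first e1), adim (e_first e2)),
    [/\ is_hom h, e_inj e1 *m h = e_inj e2 & chain_morph (e_rest e1) h (e_rest e2)].

Definition yoneda_step (N Z : amod) (e1 e2 : ext N Z) : Prop :=
  [/\ ext_exact e1, ext_exact e2 & ext_morph e1 e2].

Definition yoneda_eq (N Z : amod) : ext N Z -> ext N Z -> Prop :=
  clos_refl_sym_trans (ext N Z) (@yoneda_step N Z).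

Fixpoint splice_chain (X : amod) (c : chain kmod X) (e2 : ext kmod kmod)
    {struct c} : chain kmod X :=
  match c in chain _ X' return chain kmod X' with
  | cend X' g => cstep (g *m e_inj e2) (e_rest e2)
  | cstep X' Y g c' => cstep g (splice_chain c' e2)
  end.

Definition splice (e1 e2 : ext kmod kmod) : ext kmod kmod :=
  Ext (e_inj e1) (splice_chain (e_rest e1) e2).

(* Kronecker product: (u (x) v) (A (x) B) = (u A) (x) (v B), where
   u (x) v := mxvec (u^T *m v) *)
Definition kron m n m' n' (A : 'M[k]_(m, n)) (B : 'M[k]_(m', n')) :
    'M[k]_(m * m', n * n') :=
  lin_mx (fun X : 'M[k]_(m, m') => A^T *m X *m B).

(* comultiplications, as the action of x_i on X (x) M *)
Definition delta_Gr m n (a : 'M[k]_m) (b : 'M[k]_n) : 'M[k]_(m * n) :=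
  kron a 1%:M + kron a b + kron 1%:M b.
Definition delta_Lie m n (a : 'M[k]_m) (b : 'M[k]_n) : 'M[k]_(m * n) :=
  kron a 1%:M + kron 1%:M b.

Definition tmod (d : forall m n, 'M[k]_m -> 'M[k]_n -> 'M[k]_(m * n))
  (X M : amod) : amod := AMod (fun i => d _ _ (aact X i) (aact M i)).

Section Theta.
Variables (d : forall m n, 'M[k]_m -> 'M[k]_n -> 'M[k]_(m * n)) (M : amod).

(* the functor - (x)_k M on a chain ending at k, identifying k (x) M = M *)
Fixpoint tchain (X : amod) (c : chain kmod X) {struct c} :
    chain M (tmod d X M) :=
  match c in chain _ X' return chain M (tmod d X' M) with
  | cend X' g => @cend M (tmod d X' M) (castmx (erefl, mul1n (adim M)) (kron g (1%:M : 'M[k]_(adim M))))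
  | cstep X' Y g c' => @cstep M (tmod d X' M) (tmod d Y M) (kron g (1%:M : 'M[k]_(adim M))) (tchain c')
  end.

Definition Theta (e : ext kmod kmod) : ext M M :=
  @Ext M M (tmod d (e_first e) M) (castmx (mul1n (adim M), erefl) (kron (e_inj e) (1%:M : 'M[k]_(adim M))))
      (tchain (e_rest e)).
End Theta.

(* A_i = k[x_i]/(x_i^p) inflated to A (x_j acts as 0 for j <> i),
   basis 1, x_i, ..., x_i^(p-1) *)
Definition shiftp : 'M[k]_p := \matrix_(a, b) ((b : nat) == a.+1)%:R.
Definition Ai (i : 'I_r) : amod :=
  AMod (fun j => if j == i then shiftp else 0).

(* zeta_i : 0 -> k -> A_i --x_i--> A_i -> k -> 0, with k -> A_i : 1 |-> x_i^(p-1)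
   and A_i -> k the augmentation *)
Definition zeta (i : 'I_r) : ext kmod kmod :=
  @Ext kmod kmod (Ai i) (\row_(b < p) ((b : nat) == p.-1)%:R)
    (@cstep kmod (Ai i) (Ai i) shiftp (@cend kmod (Ai i) (\col_(a < p) ((a : nat) == 0%N)%:R))).

Definition zeta_monomial (i0 : 'I_r) (s : seq 'I_r) : ext kmod kmod :=
  foldl (fun e i => splice e (zeta i)) (zeta i0) s.

End Defs.

From HB Require Import structures.
From mathcomp Require Import all_boot all_order all_algebra.
From Stdlib Require Import Relations.Relation_Operators.
Set Implicit Arguments. Unset Strict Implicit. Unset Printing Implicit Defensive.
Import GRing.Theory.
Local Open Scope ring_scope.

(* Tensoring with M
   through either coproduct gives an exact sequence (both coproducts make
   X (x) M a module, naturally in X), so it suffices to join the two tensored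
   sequences by one morphism of sequences that is the identity on both ends M.
   The two module structures on A_i (x) M differ only in the action of x_i:
   x_i (x) V + 1 (x) x_i for Delta_Gr, with V = 1 + x_i acting on M, against
   x_i (x) 1 + 1 (x) x_i for Delta_Lie.  Since V^p = 1 in characteristic p,
   W = V^(p-1) is the inverse of V and commutes with A, and the twist
   x_i^a (x) m |-> x_i^a (x) W^a m intertwines the two actions.  Using the twist
   on the second copy of A_i and the twist followed by 1 (x) W on the first,
   all squares commute, and the end maps are preserved because W^p = 1.
   Such morphisms glue along Yoneda splices. *)

Lemma frobeniusD_comm (R : pzRingType) p (x y : R) :
  prime p -> p%:R = 0 :> R -> GRing.comm x y -> (x + y) ^+ p = x ^+ p + y ^+ p.
Proof.
case: p => // p' p_pr p0 cxy; rewrite exprDn_comm //.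
rewrite big_ord_recl big_ord_recr big1 /= ?subn0 ?subnn ?bin0 ?binn ?expr0 ?mulr1 ?mul1r ?add0r //.
move=> i _; have /dvdnP[q ->] : (p'.+1 %| 'C(p'.+1, bump 0 i))%N.
  by apply: prime_dvd_bin; rewrite //= /bump /= add1n ltnS.
by rewrite mulnC mulrnA -[_ *+ p'.+1]mulr_natr p0 mulr0 mul0rn.
Qed.

Lemma frobenius_unipotent (R : pzRingType) p (a : R) :
  prime p -> p%:R = 0 :> R -> (1 + a) ^+ p = 1 + a ^+ p.
Proof. by move=> p_pr p0; rewrite frobeniusD_comm ?expr1n //; exact/commr_sym/commr1. Qed.

Section Kronecker.
Variable k : fieldType.

Lemma mul_mxvec_kron m n m' n' (A : 'M[k]_(m, n)) (B : 'M[k]_(m', n')) u :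
  mxvec u *m kron A B = mxvec (A^T *m u *m B).
Proof. exact: (mul_vec_lin (mulmxr B \o mulmx A^T)). Qed.

Lemma mxvec_mulmxI m m' q (K K' : 'M[k]_(m * m', q)) :
  (forall u, mxvec u *m K = mxvec u *m K') -> K = K'.
Proof.
by move=> eqK; apply/row_matrixP => i; rewrite !rowE -(vec_mxK (delta_mx 0 i)) eqK.
Qed.

Lemma mul_kron m n m' n' q q' (A : 'M[k]_(m, n)) (B : 'M[k]_(m', n'))
    (C : 'M[k]_(n, q)) (D : 'M[k]_(n', q')) :
  kron A B *m kron C D = kron (A *m C) (B *m D).
Proof. by apply: mxvec_mulmxI => u; rewrite mulmxA !mul_mxvec_kron trmx_mul !mulmxA. Qed.

Lemma kronDl m n m' n' (A A' : 'M[k]_(m, n)) (B : 'M[k]_(m', n')) :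
  kron (A + A') B = kron A B + kron A' B.
Proof.
by apply: mxvec_mulmxI => u; rewrite mulmxDr !mul_mxvec_kron linearD !mulmxDl linearD.
Qed.

Lemma kronDr m n m' n' (A : 'M[k]_(m, n)) (B B' : 'M[k]_(m', n')) :
  kron A (B + B') = kron A B + kron A B'.
Proof. by apply: mxvec_mulmxI => u; rewrite mulmxDr !mul_mxvec_kron mulmxDr linearD. Qed.

Lemma kron0mx m n m' n' (B : 'M[k]_(m', n')) : kron (0 : 'M[k]_(m, n)) B = 0.
Proof. by apply: mxvec_mulmxI => u; rewrite mul_mxvec_kron trmx0 !mul0mx mulmx0 linear0. Qed.

Lemma kronmx0 m n m' n' (A : 'M[k]_(m, n)) : kron A (0 : 'M[k]_(m', n')) = 0.
Proof. by apply: mxvec_mulmxI => u; rewrite mul_mxvec_kron !mulmx0 linear0. Qed.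

Lemma kron11 m m' : kron (1%:M : 'M[k]_m) (1%:M : 'M[k]_m') = 1%:M.
Proof. by apply: mxvec_mulmxI => u; rewrite mul_mxvec_kron trmx1 mul1mx !mulmx1. Qed.

Lemma kronMnl m n m' n' (A : 'M[k]_(m, n)) (B : 'M[k]_(m', n')) j :
  kron (A *+ j) B = kron A B *+ j.
Proof. by elim: j => [|j IHj]; rewrite ?kron0mx // !mulrS kronDl IHj. Qed.

Lemma kron_suml m n m' n' (I : finType) (A : I -> 'M[k]_(m, n)) (B : 'M[k]_(m', n')) :
  kron (\sum_i A i) B = \sum_i kron (A i) B.
Proof.
apply: (big_ind2 (fun X Y => kron X B = Y)) => [|X1 X2 Y1 Y2 <- <-|//].
  exact: kron0mx.
exact: kronDl.
Qed.

Lemma kronX m n (A : 'M[k]_m) (B : 'M[k]_n) j :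
  kron A B ^+ j = kron (A ^+ j) (B ^+ j).
Proof. by elim: j => [|j IHj]; rewrite ?kron11 // !exprS IHj -mul_kron. Qed.

Lemma kronE m n m' n' (A : 'M[k]_(m, n)) (B : 'M[k]_(m', n')) i j i' j' :
  kron A B (mxvec_index i j) (mxvec_index i' j') = A i i' * B j j'.
Proof.
rewrite /kron mxE /= vec_mx_delta mxvecE -(mul_delta_mx (0 : 'I_1)).
by rewrite mulmxA -colE -mulmxA -rowE !mxE big_ord1 !mxE.
Qed.

Lemma row_free_kron1 m n q (A : 'M[k]_(m, n)) :
  row_free A -> row_free (kron A (1%:M : 'M[k]_q)).
Proof.
by case/row_freeP=> B AB; apply/row_freeP; exists (kron B 1%:M); rewrite mul_kron AB mulmx1 kron11.
Qed.

Lemma row_full_kron1 m n q (A : 'M[k]_(m, n)) :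
  row_full A -> row_full (kron A (1%:M : 'M[k]_q)).
Proof.
by case/row_fullP=> B BA; apply/row_fullP; exists (kron B 1%:M); rewrite mul_kron BA mulmx1 kron11.
Qed.

Lemma mxrank_kron1 m n q (A : 'M[k]_(m, n)) :
  \rank (kron A (1%:M : 'M[k]_q)) = (\rank A * q)%N.
Proof.
rewrite -[in LHS](mulmx_base A) -[1%:M](mulmx1 1%:M) -mul_kron.
rewrite mxrankMfree; last exact/row_free_kron1/row_base_free.
exact/eqP/row_full_kron1/col_base_full.
Qed.
End Kronecker.

Lemma index_allpairs (T1 T2 : eqType) (s1 : seq T1) (s2 : seq T2) x1 x2 :
  x1 \in s1 -> x2 \in s2 ->
  index (x1, x2) [seq (a, b) | a <- s1, b <- s2] = (index x1 s1 * size s2 + index x2 s2)%N.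
Proof.
move=> s1x1 s2x2; elim: s1 s1x1 => //= a s1 IHs1; rewrite in_cons index_cat.
have [<- _ | neq_x1a /= s1x1] := eqVneq x1 a.
  by rewrite map_f // index_map ?mul0n // => b b' [].
rewrite size_map IHs1 // mulSn addnA; case: mapP => // -[b _ [eq_x1a _]].
by rewrite eq_x1a eqxx in neq_x1a.
Qed.

Lemma mxvec_indexE m n (i : 'I_m) (j : 'I_n) :
  nat_of_ord (mxvec_index i j) = (i * n + j)%N.
Proof.
rewrite /mxvec_index /= /enum_rank enum_rank_in.unlock /= insubdK; last first.
  by rewrite cardE [_ \in _]index_mem mem_enum.
by rewrite enumT unlock /= index_allpairs ?mem_enum // !index_enum_ord size_enum_ord.
Qed.

Section Casts.
Variable k : fieldType.

Lemma mxrank_castmx m m' n n' (e1 : m = m') (e2 : n = n') (A : 'M[k]_(m, n)) :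
  \rank (castmx (e1, e2) A) = \rank A.
Proof. by case: m' / e1; case: n' / e2; rewrite castmx_id. Qed.

Lemma castmx_mul m m' n n' q q' (e1 : m = m') (e2 : n = n') (e3 : q = q')
    (A : 'M[k]_(m, n)) (B : 'M[k]_(n, q)) :
  castmx (e1, e3) (A *m B) = castmx (e1, e2) A *m castmx (e2, e3) B.
Proof. by case: m' / e1; case: n' / e2; case: q' / e3; rewrite !castmx_id. Qed.

Lemma castmx_mull m m' n q (e : m = m') (A : 'M[k]_(m, n)) (B : 'M[k]_(n, q)) :
  castmx (e, erefl) (A *m B) = castmx (e, erefl) A *m B.
Proof. by rewrite (castmx_mul _ erefl) castmx_id. Qed.

Lemma castmx_mulr m n q q' (e : q = q') (A : 'M[k]_(m, n)) (B : 'M[k]_(n, q)) :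
  castmx (erefl, e) (A *m B) = A *m castmx (erefl, e) B.
Proof. by rewrite (castmx_mul _ erefl) castmx_id. Qed.

Lemma castmx_kron1mx n (B : 'M[k]_n) :
  castmx (mul1n n, mul1n n) (kron (1%:M : 'M[k]_1) B) = B.
Proof.
have castE (x : 'I_n) : cast_ord (esym (mul1n n)) x = mxvec_index (0 : 'I_1) x.
  by apply: ord_inj; rewrite mxvec_indexE.
by apply/matrixP => i j; rewrite castmxE !castE kronE !mxE mul1r.
Qed.
End Casts.

Section Exactness.
Variables (k : fieldType) (p r : nat).
Implicit Types X Y Z W : amod k r.

Lemma is_hom_mul X Y Z (f : 'M[k]_(adim X, adim Y)) (g : 'M[k]_(adim Y, adim Z)) :
  is_hom f -> is_hom g -> is_hom (f *m g).
Proof. by move=> homf homg i; rewrite mulmxA homf -!mulmxA homg. Qed.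

Lemma exact_from_eqmx Z X (c : chain Z X) W W'
    (f : 'M[k]_(adim W, adim X)) (f' : 'M[k]_(adim W', adim X)) :
  (f :=: f')%MS -> exact_from p c f -> exact_from p c f'.
Proof.
case: X / c f f' => [X g | X Y g c] f f' eqf [fg0 rk *];
  have fg0' : f' *m g = 0 by move/sub_kermxP: fg0; rewrite eqf => /sub_kermxP.
- by split; rewrite // -eqf.
- by split; rewrite // -eqf.
Qed.

Lemma splice_chain_exact X (c : chain (kmod k r) X) W (f : 'M[k]_(adim W, adim X))
    (e : ext (kmod k r) (kmod k r)) :
  exact_from p c f -> ext_exact p e -> exact_from p (splice_chain c e) f.
Proof.
elim: c W f => [X0 g | X0 Y g c IHc] W f /=; last first.
  by case=> *; split=> //; apply: IHc.
case: e => E inj c' [fg0 rk g_full homg _] [_ modE inj_free hom_inj exact_c'] /=.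
split=> //; first by rewrite mulmxA fg0 mul0mx.
- by rewrite mxrankMfree.
- exact: (is_hom_mul homg hom_inj).
- exact: (exact_from_eqmx (eqmx_sym (eqmxMfull inj g_full)) exact_c').
Qed.

Lemma splice_exact (e1 e2 : ext (kmod k r) (kmod k r)) :
  ext_exact p e1 -> ext_exact p e2 -> ext_exact p (splice e1 e2).
Proof.
by case: e1 => X inj c [? ? ? ? exact_c] exact_e2; split=> //=; apply: splice_chain_exact.
Qed.
End Exactness.

Section Theta.
Variables (k : fieldType) (p r : nat) (M : amod k r).
Variable d : forall m n, 'M[k]_m -> 'M[k]_n -> 'M[k]_(m * n).
Hypothesis M_mod : is_mod p M.
Hypothesis tmod_mod : forall X : amod k r, is_mod p X -> is_mod p (tmod d X M).
Hypothesis d_natural : forall m m' n (g : 'M[k]_(m, m')) a a' (b : 'M[k]_n),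
  a *m g = g *m a' -> d a b *m kron g 1%:M = kron g 1%:M *m d a' b.
Hypothesis d_trivial : forall n (b : 'M[k]_n), @d 1 n 0 b = kron 1%:M b.

Lemma is_hom_tmod (X Y : amod k r) (g : 'M[k]_(adim X, adim Y)) :
  is_hom g -> @is_hom _ _ (tmod d X M) (tmod d Y M) (kron g 1%:M).
Proof. by move=> homg i; apply: d_natural. Qed.

Lemma tchain_exact X (c : chain (kmod k r) X) (W : amod k r) (f : 'M[k]_(adim W, adim X)) :
  exact_from p c f -> exact_from p (tchain d M c) (W := tmod d W M) (kron f 1%:M).
Proof.
elim: c W f => [X0 g | X0 Y g c IHc] W f /=; last first.
  case=> fg0 rk homg modY exact_c; split; rewrite ?mul_kron ?fg0 ?kron0mx //.
  - by rewrite !mxrank_kron1 -mulnDl rk.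
  - exact: is_hom_tmod.
  - exact: tmod_mod.
  - exact: IHc.
case=> fg0 rk g_full homg modZ; split=> //.
- by rewrite -castmx_mulr mul_kron fg0 kron0mx castmx_const.
- by rewrite mxrank_castmx !mxrank_kron1 -mulnDl rk.
- by rewrite /row_full mxrank_castmx mxrank_kron1 (eqP g_full) mul1n.
- move=> i /=; rewrite -{2}[aact M i]castmx_kron1mx -castmx_mul -castmx_mulr.
  by rewrite (d_natural (a' := 0)) ?d_trivial // (homg i) mulmx0.
Qed.

Lemma Theta_exact (e : ext (kmod k r) (kmod k r)) :
  ext_exact p e -> ext_exact p (Theta d M e).
Proof.
case: e => X inj c [/= modk modX inj_free hom_inj exact_c]; split=> //=.
- exact: tmod_mod.
- by rewrite row_free_castmx row_free_kron1.
- move=> i /=; rewrite -{1}[aact M i]castmx_kron1mx -castmx_mul -castmx_mull.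
  by rewrite -(d_natural (a := 0)) ?d_trivial // -(hom_inj i) mul0mx.
- exact: exact_from_eqmx (eqmx_sym (eqmx_cast _ _)) (tchain_exact exact_c).
Qed.
End Theta.

Section Coproducts.
Variable k : fieldType.

Lemma delta_Gr_natural m m' n (g : 'M[k]_(m, m')) (a : 'M[k]_m) (a' : 'M[k]_m') (b : 'M[k]_n) :
  a *m g = g *m a' -> delta_Gr a b *m kron g 1%:M = kron g 1%:M *m delta_Gr a' b.
Proof. by move=> ag; rewrite /delta_Gr !mulmxDl !mulmxDr !mul_kron !mul1mx !mulmx1 ag. Qed.

Lemma delta_Lie_natural m m' n (g : 'M[k]_(m, m')) (a : 'M[k]_m) (a' : 'M[k]_m') (b : 'M[k]_n) :
  a *m g = g *m a' -> delta_Lie a b *m kron g 1%:M = kron g 1%:M *m delta_Lie a' b.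
Proof. by move=> ag; rewrite /delta_Lie !mulmxDl !mulmxDr !mul_kron !mul1mx !mulmx1 ag. Qed.

Lemma delta_Gr0 n (b : 'M[k]_n) : delta_Gr (0 : 'M[k]_1) b = kron 1%:M b.
Proof. by rewrite /delta_Gr !kron0mx !add0r. Qed.

Lemma delta_Lie0 n (b : 'M[k]_n) : delta_Lie (0 : 'M[k]_1) b = kron 1%:M b.
Proof. by rewrite /delta_Lie !kron0mx !add0r. Qed.

Lemma delta_GrE m n (a : 'M[k]_m) (b : 'M[k]_n) :
  delta_Gr a b = kron (1 + a) (1 + b) - 1.
Proof.
rewrite /delta_Gr kronDl !kronDr kron11.
by rewrite [1%:M + _]addrC [RHS]addrAC addrK addrC.
Qed.

Lemma delta_Gr_comm m n (a a' : 'M[k]_m) (b b' : 'M[k]_n) :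
  comm_mx a a' -> comm_mx b b' -> comm_mx (delta_Gr a b) (delta_Gr a' b').
Proof.
move=> aa' bb'; rewrite !delta_GrE.
apply/commrB/commr1/commr_sym/commrB/commr1/commr_sym.
rewrite /GRing.comm -!mulmxE !mul_kron !mulmxDl !mulmxDr !mul1mx !mulmx1 aa' bb' -!addrA.
by rewrite [a' + (a + _)]addrCA [b' + (b + _)]addrCA.
Qed.

Lemma delta_Lie_comm m n (a a' : 'M[k]_m) (b b' : 'M[k]_n) :
  comm_mx a a' -> comm_mx b b' -> comm_mx (delta_Lie a b) (delta_Lie a' b').
Proof.
move=> aa' bb'; rewrite /comm_mx /delta_Lie !mulmxDl !mulmxDr !mul_kron !mul1mx !mulmx1 aa' bb'.
by rewrite addrACA [kron a b' + _]addrC addrACA.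
Qed.

Lemma delta_Lie_kron1mx m n (a : 'M[k]_m) (b W : 'M[k]_n) :
  comm_mx b W -> comm_mx (delta_Lie a b) (kron 1%:M W).
Proof. by move=> bW; rewrite /comm_mx /delta_Lie mulmxDl mulmxDr !mul_kron !mul1mx !mulmx1 bW. Qed.
End Coproducts.

Section CharacteristicP.
Variables (k : fieldType) (p : nat).
Hypotheses (p_pr : prime p) (pchar_k : p \in [pchar k]).

Lemma pchar_mx n : p%:R = 0 :> 'M[k]_n.
Proof. by rewrite -scaler_nat (pcharf0 pchar_k) scale0r. Qed.

Lemma mx_frobeniusD n (x y : 'M[k]_n) :
  comm_mx x y -> (x + y) ^+ p = x ^+ p + y ^+ p.
Proof. exact: frobeniusD_comm (pchar_mx n). Qed.

Lemma delta_Gr_nil m n (a : 'M[k]_m) (b : 'M[k]_n) :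
  a ^+ p = 0 -> b ^+ p = 0 -> delta_Gr a b ^+ p = 0.
Proof.
move=> ap0 bp0; rewrite delta_GrE; set K := kron _ _.
have := frobenius_unipotent (K - 1) p_pr (pchar_mx _).
rewrite addrC subrK kronX !frobenius_unipotent ?pchar_mx // ap0 bp0 !addr0 kron11.
by move/esym/(canRL (addKr 1)); rewrite addNr.
Qed.

Lemma delta_Lie_nil m n (a : 'M[k]_m) (b : 'M[k]_n) :
  a ^+ p = 0 -> b ^+ p = 0 -> delta_Lie a b ^+ p = 0.
Proof.
move=> ap0 bp0; rewrite /delta_Lie mx_frobeniusD; last first.
  by rewrite /comm_mx !mul_kron !mul1mx !mulmx1.
by rewrite !kronX ap0 bp0 kron0mx kronmx0 addr0.
Qed.

Lemma tmod_Gr_mod r (X M : amod k r) :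
  is_mod p X -> is_mod p M -> is_mod p (tmod (@delta_Gr k) X M).
Proof.
case=> commX nilX [commM nilM]; split=> [i j | i] /=; last exact: delta_Gr_nil.
exact: delta_Gr_comm.
Qed.

Lemma tmod_Lie_mod r (X M : amod k r) :
  is_mod p X -> is_mod p M -> is_mod p (tmod (@delta_Lie k) X M).
Proof.
case=> commX nilX [commM nilM]; split=> [i j | i] /=; last exact: delta_Lie_nil.
exact: delta_Lie_comm.
Qed.
End CharacteristicP.

Lemma sum_ord_indicator (R : pzSemiRingType) n x (F : 'I_n.+1 -> R) :
  \sum_(c < n.+1) ((c : nat) == x)%:R * F c = if (x < n.+1)%N then F (inord x) else 0.
Proof.
case: ltnP => [x_lt | x_ge]; last first.
  by rewrite big1 // => c _; rewrite ltn_eqF ?mul0r // (leq_trans (ltn_ord c) x_ge).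
rewrite (bigD1 (inord x)) //= inordK // eqxx mul1r big1 ?addr0 // => c neq_cx.
suff /negbTE -> : (c : nat) != x by rewrite mul0r.
by apply: contra neq_cx => /eqP <-; rewrite inord_val.
Qed.

Section Zeta.
Variables (k : fieldType) (p' r : nat).
Local Notation p := p'.+1.
Local Notation S := (shiftp k p).

Lemma shiftpX j (a b : 'I_p) : (S ^+ j) a b = ((b : nat) == a + j)%N%:R.
Proof.
elim: j b => [|j IHj] b; first by rewrite expr0 !mxE addn0 eq_sym.
rewrite exprSr -mulmxE mxE; under eq_bigr do rewrite IHj mxE.
rewrite sum_ord_indicator; case: ltnP => [lt_ajp | ge_ajp]; first by rewrite inordK // addnS.
by rewrite addnS ltn_eqF // ltnS (leq_trans _ (ltnW ge_ajp)) // -ltnS.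
Qed.

Lemma shiftp_nil : S ^+ p = 0.
Proof. by apply/matrixP => a b; rewrite shiftpX mxE ltn_eqF // ltn_addl. Qed.

Lemma row_last_shiftp : (delta_mx 0 ord_max : 'rV[k]_p) *m S = 0.
Proof. by rewrite -rowE; apply/rowP => b; rewrite !mxE ltn_eqF. Qed.

Lemma shiftp_col0 : S *m (delta_mx ord0 0 : 'cV[k]_p) = 0.
Proof. by rewrite -colE; apply/colP => a; rewrite !mxE. Qed.

Lemma mxrank_shiftp : \rank S = p'.
Proof.
apply/eqP; rewrite eqn_leq; apply/andP; split.
  have := mxrank_mul_min (delta_mx 0 ord_max : 'rV[k]_p) S.
  by rewrite row_last_shiftp mxrank0 mxrank_delta leqn0 subn_eq0 add1n ltnS.
have SST : S *m S^T = pid_mx p'.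
  apply/matrixP => a b; rewrite !mxE; under eq_bigr do rewrite !mxE.
  rewrite sum_ord_indicator ltnS; case: ifP => [lt_ap | ge_ap].
    by rewrite inordK ?ltnS // eqSS andbT.
  by rewrite andbF.
by rewrite -[X in (X <= _)%N](@rank_pid_mx k p p p') ?leqnSn // -SST mxrankM_maxl.
Qed.

Lemma zetaE (i : 'I_r) :
  zeta k p i = @Ext _ _ (kmod k r) (kmod k r) (Ai k p i) (delta_mx 0 ord_max)
    (@cstep _ _ (kmod k r) (Ai k p i) (Ai k p i) S
       (@cend _ _ (kmod k r) (Ai k p i) (delta_mx ord0 0))).
Proof.
congr Ext; first by apply/rowP => b; rewrite !mxE.
by do 2 f_equal; apply/colP => a; rewrite !mxE andbT.
Qed.

Lemma kmod_mod : is_mod p (kmod k r).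
Proof. by split=> [i j | i] /=; rewrite ?mulmx0 ?expr0n. Qed.

Lemma Ai_mod (i : 'I_r) : is_mod p (Ai k p i).
Proof.
split=> [j1 j2 | j] /=; first by case: (j1 == i); case: (j2 == i); rewrite ?mulmx0 ?mul0mx.
by case: (j == i); [exact: shiftp_nil | exact: expr0n].
Qed.

Lemma zeta_exact (i : 'I_r) : ext_exact p (zeta k p i).
Proof.
have homS j : aact (Ai k p i) j *m S = S *m aact (Ai k p i) j.
  by rewrite /=; case: (j == i); rewrite ?mulmx0 ?mul0mx.
rewrite zetaE; split=> /=; [exact: kmod_mod | exact: Ai_mod | | | split=> /=].
- by rewrite /row_free mxrank_delta.
- by move=> j; rewrite mul0mx /=; case: (j == i); rewrite ?row_last_shiftp ?mulmx0.
- exact: row_last_shiftp.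
- by rewrite mxrank_delta mxrank_shiftp.
- exact: homS.
- exact: Ai_mod.
split=> /=; [exact: shiftp_col0 | | | | exact: kmod_mod].
- by rewrite mxrank_delta mxrank_shiftp addn1.
- by rewrite /row_full mxrank_delta.
- by move=> j; rewrite mulmx0 /=; case: (j == i); rewrite ?shiftp_col0 ?mul0mx.
Qed.
End Zeta.

Lemma zeta_monomial_exact (k : fieldType) p' r (i0 : 'I_r) (s : seq 'I_r) :
  ext_exact p'.+1 (zeta_monomial k p'.+1 i0 s).
Proof.
rewrite /zeta_monomial; elim: s (zeta k p'.+1 i0) (zeta_exact k p' i0) => //= i s IHs e exact_e.
by apply/IHs/splice_exact/zeta_exact.
Qed.

Lemma sumr_mulrb_eq (V : nmodType) (I : finType) (x : I) (F : I -> V) :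
  \sum_i F i *+ (x == i) = F x.
Proof. by under eq_bigr do rewrite mulrb eq_sym; rewrite -big_mkcond big_pred1_eq. Qed.

Section Twist.
Variables (k : fieldType) (p' : nat).
Local Notation p := p'.+1.
Local Notation S := (shiftp k p).

Lemma shiftp_sum : S = \sum_(c < p') delta_mx (widen_ord (leqnSn p') c) (lift ord0 c).
Proof.
apply/matrixP => a b; rewrite summxE mxE; under eq_bigr do rewrite mxE.
have [b' -> | ->] := unliftP ord0 b; last by rewrite big1 // => c _; rewrite andbF.
rewrite (bigD1 b') //= big1 => [|c /negbTE neq_cb]; last first.
  by rewrite (inj_eq lift_inj) [b' == c]eq_sym neq_cb andbF.
by rewrite eqxx andbT addr0 /bump add1n eqSS eq_sym.
Qed.

Variables (n : nat) (W : 'M[k]_n).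

Definition twist : 'M[k]_(p * n) := \sum_(a < p) kron (delta_mx a a) (W ^+ a).

Lemma kron_shiftp_twist X Y : X *m W = Y -> comm_mx Y W ->
  kron S X *m twist = twist *m kron S Y.
Proof.
move=> XW YW; rewrite shiftp_sum !kron_suml mulmx_suml mulmx_sumr; apply: eq_bigr => c _.
rewrite /twist mulmx_suml mulmx_sumr.
under eq_bigr do rewrite mul_kron mul_delta_mx_cond kronMnl.
under [RHS]eq_bigr do rewrite mul_kron mul_delta_mx_cond kronMnl eq_sym.
rewrite !sumr_mulrb_eq /= exprS mulmxE mulrA -mulmxE XW !mulmxE.
by congr kron; apply: commrX.
Qed.

Lemma kron_last_twist :
  kron (delta_mx 0 ord_max : 'rV[k]_p) 1%:M *m twist = kron (delta_mx 0 ord_max) (W ^+ p').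
Proof.
rewrite /twist mulmx_sumr; under eq_bigr do rewrite mul_kron mul_delta_mx_cond kronMnl mul1mx.
by rewrite sumr_mulrb_eq.
Qed.

Lemma twist_kron_col0 :
  twist *m kron (delta_mx ord0 0 : 'cV[k]_p) 1%:M = kron (delta_mx ord0 0) 1%:M.
Proof.
rewrite /twist mulmx_suml.
under eq_bigr do rewrite mul_kron mul_delta_mx_cond kronMnl mulmx1 eq_sym.
by rewrite sumr_mulrb_eq expr0.
Qed.

Lemma kron1mx_twist Y : comm_mx Y W ->
  kron 1%:M Y *m twist = twist *m kron 1%:M Y.
Proof.
move=> YW; rewrite /twist mulmx_suml mulmx_sumr; apply: eq_bigr => a _.
rewrite !mul_kron mul1mx mulmx1 !mulmxE; congr kron.
exact: commrX.
Qed.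
End Twist.

Section TwistMorphism.
Variables (k : fieldType) (p' r : nat).
Local Notation p := p'.+1.
Hypotheses (p_pr : prime p) (pchar_k : p \in [pchar k]).
Variables (M : amod k r) (i : 'I_r).
Hypothesis M_mod : is_mod p M.
Local Notation V := (1 + aact M i).
Local Notation W := (V ^+ p').
Local Notation Gr := (@delta_Gr k).
Local Notation Lie := (@delta_Lie k).

Lemma unipotent_expr_char : V ^+ p = 1.
Proof. by rewrite frobenius_unipotent ?pchar_mx // M_mod.2 addr0. Qed.

Lemma mul_unipotent_inv : V *m W = 1.
Proof. by rewrite mulmxE -exprS unipotent_expr_char. Qed.

Lemma unipotent_inv_expr_char : W ^+ p = 1.
Proof. by rewrite -exprM mulnC exprM unipotent_expr_char expr1n. Qed.

Lemma unipotent_inv_comm j : comm_mx (aact M j) W.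
Proof. by apply/commrX/commrD; [exact: commr1 | exact: M_mod.1]. Qed.

Lemma twist_hom : @is_hom k r (tmod Gr (Ai k p i) M) (tmod Lie (Ai k p i) M) (twist p' W).
Proof.
move=> j /=; rewrite /delta_Gr /delta_Lie; case: eqP => [-> | _]; last first.
  by rewrite !kron0mx !add0r (kron1mx_twist _ (unipotent_inv_comm j)).
rewrite -kronDr !mulmxDl !mulmxDr (kron1mx_twist _ (unipotent_inv_comm i)).
by rewrite (kron_shiftp_twist p' mul_unipotent_inv (comm1mx _)).
Qed.

Lemma Theta_zeta_morph : ext_morph (Theta Gr M (zeta k p i)) (Theta Lie M (zeta k p i)).
Proof.
have homW : @is_hom k r (tmod Lie (Ai k p i) M) (tmod Lie (Ai k p i) M) (kron 1%:M W).
  by move=> j; apply/delta_Lie_kron1mx/unipotent_inv_comm.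
rewrite zetaE; exists (twist p' W *m kron 1%:M W); split=> /=.
- exact: is_hom_mul twist_hom homW.
- rewrite -castmx_mull mulmxA kron_last_twist mul_kron mulmx1 mulmxE -exprSr.
  by rewrite unipotent_inv_expr_char.
exists (twist p' W); split=> /=; first exact: twist_hom.
- by rewrite (kron_shiftp_twist p' (mul1mx _)) -?mulmxA ?mul_kron ?mul1mx ?mulmx1.
- by rewrite -castmx_mulr twist_kron_col0.
Qed.
End TwistMorphism.

Section SpliceMorphism.
Variables (k : fieldType) (r : nat) (M : amod k r).
Variables d1 d2 : forall m n, 'M[k]_m -> 'M[k]_n -> 'M[k]_(m * n).

Lemma tchain_splice_morph X (c : chain (kmod k r) X)
    (h : 'M[k]_(adim (tmod d1 X M), adim (tmod d2 X M)))
    (e : ext (kmod k r) (kmod k r)) :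
  ext_morph (Theta d1 M e) (Theta d2 M e) ->
  chain_morph (tchain d1 M c) h (tchain d2 M c) ->
  chain_morph (tchain d1 M (splice_chain c e)) h (tchain d2 M (splice_chain c e)).
Proof.
case: e => E inj c' [h' [homh' /= inj_h' morph_h']].
rewrite -castmx_mull in inj_h'; move/(can_inj (castmxK _ _)): inj_h' => inj_h'.
elim: c h => [X0 g | X0 Y g c IHc] h /=; last first.
  by case=> h'' [homh'' comm_h'' morph_h'']; exists h''; split=> //; apply: IHc.
rewrite -castmx_mulr => /(can_inj (castmxK _ _)) g_h.
exists h'; split=> //.
have -> : kron (g *m inj) (1%:M : 'M[k]_(adim M)) = kron g 1%:M *m kron inj 1%:M.
  by rewrite mul_kron mulmx1.
by rewrite -mulmxA inj_h' {1}g_h -mulmxA.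
Qed.

Lemma Theta_splice_morph (e1 e2 : ext (kmod k r) (kmod k r)) :
  ext_morph (Theta d1 M e1) (Theta d2 M e1) -> ext_morph (Theta d1 M e2) (Theta d2 M e2) ->
  ext_morph (Theta d1 M (splice e1 e2)) (Theta d2 M (splice e1 e2)).
Proof.
case: e1 => X inj c [h [homh inj_h morph_h]] morph_e2.
by exists h; split=> //; apply: tchain_splice_morph.
Qed.
End SpliceMorphism.

Lemma Theta_monomial_morph (k : fieldType) p' r (M : amod k r) (i0 : 'I_r) (s : seq 'I_r) :
  prime p'.+1 -> p'.+1 \in [pchar k] -> is_mod p'.+1 M ->
  ext_morph (Theta (@delta_Gr k) M (zeta_monomial k p'.+1 i0 s))
            (Theta (@delta_Lie k) M (zeta_monomial k p'.+1 i0 s)).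
Proof.
move=> p_pr pchar_k M_mod; rewrite /zeta_monomial.
elim: s (zeta k p'.+1 i0) (Theta_zeta_morph p_pr pchar_k i0 M_mod) => //= i s IHs e morph_e.
exact/IHs/Theta_splice_morph/(Theta_zeta_morph p_pr pchar_k i M_mod).
Qed.

Theorem theorem4p3 (k : fieldType) (p r : nat) (hp : prime p)
    (hchar : p \in [pchar k]) (M : amod k r) (hM : is_mod p M)
    (i0 : 'I_r) (s : seq 'I_r) :
  yoneda_eq p (Theta (@delta_Gr k) M (zeta_monomial k p i0 s))
              (Theta (@delta_Lie k) M (zeta_monomial k p i0 s)).
Proof.
case: p hp hchar hM => // p' hp hchar hM.
apply: rst_step; split; last exact: Theta_monomial_morph.
- apply: Theta_exact (zeta_monomial_exact k p' i0 s) => //.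
  + by move=> X modX; apply: tmod_Gr_mod.
  + exact: delta_Gr_natural.
  + exact: delta_Gr0.
- apply: Theta_exact (zeta_monomial_exact k p' i0 s) => //.
  + by move=> X modX; apply: tmod_Lie_mod.
  + exact: delta_Lie_natural.
  + exact: delta_Lie0.
Qed.
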